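(* Let $A\in\mathbb{R}^{m\times n}$ with $m\ge n$ and with nonzero rows $a_1^\top,\dots,a_m^\top$, let $x\in\mathbb{R}^n$ and set $b:=Ax\in\mathbb{R}^m$ (so $x$ solves the consistent system $Ax=b$). Fix $\beta\in[0,1)$, $M\in[0,1]$ and $l\in\{1,\dots,n\}$. Let $\sigma_l$ be the $l$-th largest singular value of $A$ and $v_l$ an associated right singular vector. Given $x_0\in\mathbb{R}^n$ and $y_0=0\in\mathbb{R}^n$, define for $k=0,1,2,\dots$ $$x_{k+1}=x_k+\frac{b_{i_k}-\langle x_k,a_{i_k}\rangle}{\|a_{i_k}\|_2^2}a_{i_k}+My_k,\qquad y_{k+1}=\beta y_k+(1-\beta)(x_{k+1}-x_k),$$ where the indices $i_0,i_1,\dots$ are chosen independently, each equal to $i\in\{1,\dots,m\}$ with probability $\|a_i\|_2^2/\|A\|_F^2$. Set $$r:=1-\frac{\sigma_l^2}{\|A\|_F^2}+M(1-\beta),\qquad \zeta:=M(1-\beta)^2.$$ Then for all $k\ge 0$, $$\mathbb{E}\langle x_{k+1}-x,v_l\rangle=\begin{bmatrix} r\\ \zeta\end{bmatrix}^\top\begin{bmatrix} r&\zeta\\ -1&\beta\end{bmatrix}^k\begin{bmatrix}1\\ \frac{-1}{1-\beta}\end{bmatrix}\langle x_0-x,v_l\rangle .$$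
   Context: $\|\cdot\|_2$ is the Euclidean norm, $\langle\cdot,\cdot\rangle$ the standard inner product, $\|A\|_F$ the Frobenius norm, $b_i$ the $i$-th entry of $b$. The expectation is over the random indices $i_0,\dots,i_k$. The iteration above is called randomized Kaczmarz with geometrically smoothed momentum (KGSM). *)

From HB Require Import structures.
From mathcomp Require Import all_boot all_order all_algebra.
From mathcomp Require Import reals.
Set Implicit Arguments. Unset Strict Implicit. Unset Printing Implicit Defensive.
Import Order.TTheory GRing.Theory Num.Theory.
Local Open Scope ring_scope.

Section KGSM.
Variable R : realType.

Definition dotv n (u v : 'cV[R]_n) : R := \sum_(j < n) u j 0 * v j 0.

Definition frob2 m n (A : 'M[R]_(m, n)) : R := \sum_(i < m) \sum_(j < n) A i j ^+ 2.

Definition arow m n (A : 'M[R]_(m, n)) (i : 'I_m) : 'cV[R]_n := (row i A)^T.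

Definition kprob m n (A : 'M[R]_(m, n)) (i : 'I_m) : R :=
  dotv (arow A i) (arow A i) / frob2 A.

Definition rect_diag m n (s : 'I_n -> R) : 'M[R]_(m, n) :=
  \matrix_(i < m, j < n) (if val i == val j then s j else 0).

Definition is_svd m n (A : 'M[R]_(m, n)) (U : 'M[R]_m) (s : 'I_n -> R)
  (V : 'M[R]_n) : Prop :=
  [/\ U^T *m U = 1%:M, V^T *m V = 1%:M,
      (forall j, 0 <= s j),
      (forall j k : 'I_n, (j <= k)%N -> s k <= s j) &
      A = U *m rect_diag m s *m V^T].

Definition kgsm_step m n (A : 'M[R]_(m, n)) (b : 'cV[R]_m) (M beta : R)
  (st : 'cV[R]_n * 'cV[R]_n) (i : 'I_m) : 'cV[R]_n * 'cV[R]_n :=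
  let: (xk, yk) := st in
  let a := arow A i in
  let xk1 := xk + ((b i 0 - dotv xk a) / dotv a a) *: a + M *: yk in
  (xk1, beta *: yk + (1 - beta) *: (xk1 - xk)).

Definition kgsm_run m n (A : 'M[R]_(m, n)) (b : 'cV[R]_m) (M beta : R)
  (x0 : 'cV[R]_n) (s : seq 'I_m) : 'cV[R]_n * 'cV[R]_n :=
  foldl (kgsm_step A b M beta) (x0, 0) s.

Definition kexp m n (A : 'M[R]_(m, n)) (k : nat) (f : seq 'I_m -> R) : R :=
  \sum_(t : k.-tuple 'I_m) (\prod_(i <- t) kprob A i) * f t.

Definition mx2 (a b c d : R) : 'M[R]_2 :=
  \matrix_(i < 2, j < 2)
    (if val i == 0%N then (if val j == 0%N then a else b)
     else (if val j == 0%N then c else d)).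

Definition rv2 (a b : R) : 'rV[R]_2 := \row_(j < 2) (if val j == 0%N then a else b).
Definition cv2 (a b : R) : 'cV[R]_2 := \col_(i < 2) (if val i == 0%N then a else b).

End KGSM.

From HB Require Import structures.
From mathcomp Require Import all_boot all_order all_algebra.
From mathcomp Require Import reals ring.
Set Implicit Arguments. Unset Strict Implicit. Unset Printing Implicit Defensive.
Import Order.TTheory GRing.Theory Num.Theory.
Local Open Scope ring_scope.

(* Conditioning on the last index, the Kaczmarz projection averages to
   [A^T A / ||A||_F^2], and [A^T A v_l = sigma_l^2 v_l]; hence the pair
   ([E <x_k - x, v_l>], [E <y_k, v_l>]) follows a linear recursion with a fixed
   2x2 matrix.  Eliminating the momentum coordinate, [E <x_k - x, v_l>] obeys a
   second-order recurrence whose characteristic polynomial is that of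
   [[r, zeta], [-1, beta]].  By Cayley-Hamilton the right-hand side obeys the
   same recurrence, and both sides agree for k = 0 and k = 1. *)

Lemma eq_linrec2 (R : pzRingType) (a c : R) (f g : nat -> R) :
  (forall j, f j.+2 = a * f j.+1 + c * f j) ->
  (forall j, g j.+2 = a * g j.+1 + c * g j) ->
  f 0%N = g 0%N -> f 1%N = g 1%N -> forall j, f j = g j.
Proof.
move=> f_rec g_rec fg0 fg1.
suff fgS j : f j = g j /\ f j.+1 = g j.+1 by move=> j; case: (fgS j).
elim: j => [|j [fgj fgj1]]; first by [].
by split=> //; rewrite f_rec g_rec fgj fgj1.
Qed.

Section InnerProduct.
Variable R : realType.

Lemma dotvC n (u w : 'cV[R]_n) : dotv u w = dotv w u.
Proof. by rewrite /dotv; apply: eq_bigr => j _; rewrite mulrC. Qed.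

Lemma dotvDl n (u u' w : 'cV[R]_n) : dotv (u + u') w = dotv u w + dotv u' w.
Proof. by rewrite /dotv -big_split; apply: eq_bigr => j _; rewrite mxE mulrDl. Qed.

Lemma dotvZl n a (u w : 'cV[R]_n) : dotv (a *: u) w = a * dotv u w.
Proof. by rewrite /dotv mulr_sumr; apply: eq_bigr => j _; rewrite mxE mulrA. Qed.

Lemma dotvZr n a (u w : 'cV[R]_n) : dotv u (a *: w) = a * dotv u w.
Proof. by rewrite dotvC dotvZl dotvC. Qed.

Lemma dotvBl n (u u' w : 'cV[R]_n) : dotv (u - u') w = dotv u w - dotv u' w.
Proof. by rewrite dotvDl -scaleN1r dotvZl mulN1r. Qed.

Lemma dotv0l n (w : 'cV[R]_n) : dotv 0 w = 0.
Proof. by rewrite -(scale0r 0) dotvZl mul0r. Qed.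

Lemma dotvv_ge0 n (u : 'cV[R]_n) : 0 <= dotv u u.
Proof. by rewrite /dotv sumr_ge0 // => j _; rewrite -expr2 sqr_ge0. Qed.

Lemma dotvv_eq0 n (u : 'cV[R]_n) : (dotv u u == 0) = (u == 0).
Proof.
apply/eqP/eqP => [uu0|->]; last exact: dotv0l.
apply/matrixP => j z; rewrite ord1 mxE; apply/eqP; rewrite -sqrf_eq0 expr2.
by apply/eqP/(psumr_eq0P _ uu0) => // i _; rewrite -expr2 sqr_ge0.
Qed.

Lemma dotv_arow m n (A : 'M[R]_(m, n)) (u : 'cV[R]_n) i :
  dotv (arow A i) u = (A *m u) i 0.
Proof. by rewrite /dotv mxE; apply: eq_bigr => j _; rewrite !mxE. Qed.

Lemma dotv_gram m n (A : 'M[R]_(m, n)) (u w : 'cV[R]_n) :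
  dotv u (A^T *m (A *m w)) = \sum_i dotv u (arow A i) * dotv (arow A i) w.
Proof.
under [RHS]eq_bigr do rewrite dotvC !dotv_arow.
rewrite /dotv; under [LHS]eq_bigr do rewrite mxE mulr_sumr.
rewrite exchange_big; apply: eq_bigr => i _.
rewrite [(A *m u) i 0]mxE mulr_suml; apply: eq_bigr => j _.
by rewrite [A^T _ _]mxE mulrA [u j 0 * _]mulrC.
Qed.
End InnerProduct.

Section SingularVectors.
Variable R : realType.

Lemma rect_diag_gram m n (s : 'I_n -> R) : (n <= m)%N ->
  (rect_diag m s)^T *m rect_diag m s = diag_mx (\row_j s j ^+ 2).
Proof.
move=> le_nm; apply/matrixP => j k; rewrite !mxE.
rewrite (bigD1 (widen_ord le_nm j)) //= big1 => [|i ij]; last first.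
  rewrite !mxE; case: eqP => [eq_ij|]; last by rewrite mul0r.
  by case/eqP: ij; apply: val_inj.
rewrite !mxE /= eqxx addr0; case: (eqVneq j k) => [->|jk].
  by rewrite eqxx mulr1n expr2.
by rewrite (inj_eq val_inj) (negPf jk) mulr0 mulr0n.
Qed.

Lemma svd_gram_col m n (A : 'M[R]_(m, n)) U s V (l : 'I_n) :
  (n <= m)%N -> is_svd A U s V ->
  A^T *m (A *m col l V) = s l ^+ 2 *: col l V.
Proof.
move=> le_nm [UU VV _ _ ->].
have VVl : V^T *m col l V = delta_mx l 0 by rewrite colE mulmxA VV mul1mx.
rewrite !trmx_mul trmxK !mulmxA -(mulmxA _ U^T) UU mulmx1.
rewrite -(mulmxA _ _ (col l V)) VVl -(mulmxA V) rect_diag_gram // mul_mx_diag.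
by apply/matrixP => i j; rewrite ord1 !mxE (bigD1 l) //= big1 => [|k /negPf kl];
  rewrite !mxE ?eqxx ?kl ?mulr0 ?addr0 ?mulr1 1?mulrC.
Qed.

End SingularVectors.

Lemma sum_tuple_rcons (V : nmodType) (T : finType) k (F : k.+1.-tuple T -> V) :
  \sum_(t : k.+1.-tuple T) F t =
  \sum_(t : k.-tuple T) \sum_(j : T) F [tuple of rcons t j].
Proof.
rewrite pair_big /=.
pose h (p : k.-tuple T * T) : k.+1.-tuple T := [tuple of rcons p.1 p.2].
pose g (t : k.+1.-tuple T) : k.-tuple T * T :=
  ([tuple of belast (thead t) (behead_tuple t)], last (thead t) (behead_tuple t)).
have t_eta (t : k.+1.-tuple T) : tval t = thead t :: behead t.
  by rewrite [in LHS](tuple_eta t).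
rewrite (reindex h) /=; first by apply: eq_bigr => -[].
exists g => [[t j] _|t _]; last by apply/val_inj; rewrite /= -lastI -t_eta.
have := t_eta (h (t, j)); rewrite lastI /= => /rcons_inj[t_eq j_eq].
by congr pair; [apply/val_inj; rewrite /= -t_eq | rewrite /= -j_eq].
Qed.

Section Sampling.
Variables (R : realType) (m n : nat) (A : 'M[R]_(m, n)).

Lemma frob2E : frob2 A = \sum_i dotv (arow A i) (arow A i).
Proof. by apply: eq_bigr => i _; apply: eq_bigr => j _; rewrite !mxE expr2. Qed.

Lemma dotv_arow_neq0 i : row i A != 0 -> dotv (arow A i) (arow A i) != 0.
Proof. by rewrite dotvv_eq0 trmx_eq0. Qed.

Lemma frob2_neq0 i : row i A != 0 -> frob2 A != 0.
Proof.
move=> /dotv_arow_neq0; apply: contra; rewrite frob2E => /eqP A0.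
by apply/eqP/(psumr_eq0P _ A0) => // j _; apply: dotvv_ge0.
Qed.

Lemma sum_kprob : frob2 A != 0 -> \sum_i kprob A i = 1.
Proof. by move=> A0; rewrite /kprob -mulr_suml -frob2E divff. Qed.

Lemma eq_kexp k (f g : seq 'I_m -> R) :
  (forall s, f s = g s) -> kexp A k f = kexp A k g.
Proof. by move=> fg; apply: eq_bigr => t _; rewrite fg. Qed.

Lemma kexp_lincomb k (f g : seq 'I_m -> R) a c :
  kexp A k (fun t => a * f t + c * g t) = a * kexp A k f + c * kexp A k g.
Proof.
rewrite /kexp !mulr_sumr -big_split; apply: eq_bigr => t _ /=.
by rewrite mulrDr !mulrA ![_ * (\prod_(i <- _) _)]mulrC.
Qed.

Lemma kexp0 (f : seq 'I_m -> R) : kexp A 0 f = f [::].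
Proof.
rewrite /kexp (eq_bigr (fun _ => f [::])) => [|t _].
  by rewrite sumr_const card_tuple expn0.
by rewrite (tuple0 t) big_nil mul1r.
Qed.

Lemma kexp_rcons k (f : seq 'I_m -> R) :
  kexp A k.+1 f = kexp A k (fun t => \sum_j kprob A j * f (rcons t j)).
Proof.
rewrite /kexp sum_tuple_rcons; apply: eq_bigr => t _.
by rewrite mulr_sumr; apply: eq_bigr => j _; rewrite /= big_rcons mulrA.
Qed.

Lemma kgsm_run_rcons b M beta x0 s j :
  kgsm_run A b M beta x0 (rcons s j) =
  kgsm_step A b M beta (kgsm_run A b M beta x0 s) j.
Proof. exact: foldl_rcons. Qed.

End Sampling.

Section TwoByTwo.
Variable R : realType.

Lemma mx2_sqr (a b c d : R) :
  mx2 a b c d ^+ 2 = (a + d) *: mx2 a b c d - (a * d - b * c) *: 1.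
Proof.
apply/matrixP => i j; rewrite !mxE !big_ord_recl big_ord0 /= !mxE /=.
by case: i => [[|[|?]] ?] //=; case: j => [[|[|?]] ?] //=; ring.
Qed.

Lemma mx2_exprSS (a b c d : R) (u : 'rV[R]_2) (w : 'cV[R]_2) j :
  let G i := (u *m mx2 a b c d ^+ i *m w) 0 0 in
  G j.+2 = (a + d) * G j.+1 - (a * d - b * c) * G j.
Proof.
rewrite /= [_ ^+ j.+2]exprSr exprSr -mulrA -expr2 mx2_sqr mulrBr -!scalerAr.
rewrite mulr1 -exprSr mulmxBr mulmxBl -!scalemxAr -!scalemxAl.
by set P := u *m _ *m w; set Q := u *m _ *m w; rewrite !mxE.
Qed.

Lemma rv2_cv2 (a b c d : R) : (rv2 a b *m cv2 c d) 0 0 = a * c + b * d.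
Proof. by rewrite !mxE !big_ord_recl big_ord0 /= !mxE /= addr0. Qed.

Lemma rv2_mx2 (a b p q u w : R) :
  rv2 a b *m mx2 p q u w = rv2 (a * p + b * u) (a * q + b * w).
Proof.
apply/matrixP => i j; rewrite !mxE !big_ord_recl big_ord0 /= !mxE /=.
by case: j => [[|[|?]] ?] //=; rewrite addr0.
Qed.

End TwoByTwo.

Section KGSMMeans.
Variables (R : realType) (m n : nat) (A : 'M[R]_(m, n)).
Variables (x v : 'cV[R]_n) (M beta lambda : R).
Hypothesis m_gt0 : (0 < m)%N.
Hypothesis rowsA : forall i, row i A != 0.
Hypothesis gram_v : A^T *m (A *m v) = lambda *: v.

Local Notation step := (kgsm_step A (A *m x) M beta).
Local Notation err st := (dotv (st.1 - x) v).
Local Notation mom st := (dotv st.2 v).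
Local Notation c := (1 - lambda / frob2 A).

Let frob2A_neq0 : frob2 A != 0 := frob2_neq0 (rowsA (Ordinal m_gt0)).

Lemma mean_step_err st :
  \sum_j kprob A j * err (step st j) = c * err st + M * mom st.
Proof.
case: st => xk yk /=.
have step_j j : kprob A j * err (step (xk, yk) j) =
    kprob A j * (dotv (xk - x) v + M * dotv yk v)
    - dotv (xk - x) (arow A j) * dotv (arow A j) v / frob2 A.
  have aj_neq0 := dotv_arow_neq0 (rowsA j).
  rewrite /= -dotv_arow !dotvBl !dotvDl !dotvZl /kprob.
  rewrite [dotv xk (arow A j)]dotvC [dotv x (arow A j)]dotvC.
  by field; apply/andP.
rewrite (eq_bigr _ (fun j _ => step_j j)) sumrB -mulr_suml sum_kprob // mul1r.
by rewrite -mulr_suml -dotv_gram gram_v dotvZr; field.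
Qed.

Lemma mom_step st j :
  mom (step st j) = beta * mom st + (1 - beta) * (err (step st j) - err st).
Proof.
by case: st => xk yk; rewrite /= [LHS]dotvDl !dotvZl -dotvBl opprB addrA subrK.
Qed.

Lemma mean_step_mom st :
  \sum_j kprob A j * mom (step st j) =
  beta * mom st + (1 - beta) * ((c - 1) * err st + M * mom st).
Proof.
transitivity (\sum_j kprob A j * (beta * mom st - (1 - beta) * err st)
  + \sum_j (1 - beta) * (kprob A j * err (step st j))).
  by rewrite -big_split; apply: eq_bigr => j _ /=; rewrite mom_step; ring.
by rewrite -mulr_suml -mulr_sumr sum_kprob // mul1r mean_step_err; ring.
Qed.

Variable x0 : 'cV[R]_n.
Local Notation run := (kgsm_run A (A *m x) M beta x0).
Local Notation Eerr j := (kexp A j (fun t => err (run t))).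
Local Notation Emom j := (kexp A j (fun t => mom (run t))).

Lemma mean_err_succ j : Eerr j.+1 = c * Eerr j + M * Emom j.
Proof.
rewrite kexp_rcons -kexp_lincomb; apply: eq_kexp => t.
by under eq_bigr do rewrite kgsm_run_rcons; rewrite mean_step_err.
Qed.

Lemma mean_mom_succ j :
  Emom j.+1 = (1 - beta) * (c - 1) * Eerr j + (beta + (1 - beta) * M) * Emom j.
Proof.
rewrite kexp_rcons -kexp_lincomb; apply: eq_kexp => t.
by under eq_bigr do rewrite kgsm_run_rcons; rewrite mean_step_mom; ring.
Qed.

Lemma mean_err_rec2 j :
  Eerr j.+2 = (c + M * (1 - beta) + beta) * Eerr j.+1
              - (c * beta + M * (1 - beta)) * Eerr j.
Proof. by rewrite !mean_err_succ mean_mom_succ; ring. Qed.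

Lemma mean_err_init :
  Eerr 1%N = c * dotv (x0 - x) v /\
  Eerr 2%N = (c * c + M * (1 - beta) * (c - 1)) * dotv (x0 - x) v.
Proof.
have Emom0 : Emom 0 = 0 by rewrite kexp0 dotv0l.
by rewrite !mean_err_succ mean_mom_succ Emom0 kexp0; split; ring.
Qed.

End KGSMMeans.

Theorem theorem1p1 (R : realType) (m n : nat) (A : 'M[R]_(m, n))
  (x : 'cV[R]_n) (beta M : R) (l : 'I_n)
  (U : 'M[R]_m) (s : 'I_n -> R) (V : 'M[R]_n) (x0 : 'cV[R]_n) (k : nat) :
  (n <= m)%N ->
  (forall i : 'I_m, row i A != 0) ->
  0 <= beta -> beta < 1 -> 0 <= M -> M <= 1 ->
  is_svd A U s V ->
  let b := A *m x in
  let sigma := s l in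
  let v := col l V in
  let r := 1 - sigma ^+ 2 / frob2 A + M * (1 - beta) in
  let zeta := M * (1 - beta) ^+ 2 in
  kexp A k.+1 (fun t => dotv ((kgsm_run A b M beta x0 t).1 - x) v)
  = (rv2 r zeta *m (mx2 r zeta (-1) beta) ^+ k *m cv2 1 (- 1 / (1 - beta))) 0 0
    * dotv (x0 - x) v.
Proof.
move=> le_nm rowsA _ beta_lt1 _ _ svdA b sigma v r zeta.
have m_gt0 : (0 < m)%N := leq_ltn_trans (leq0n l) (leq_trans (ltn_ord l) le_nm).
have frob2A_neq0 := frob2_neq0 (rowsA (Ordinal m_gt0)).
have beta_neq1 : 1 - beta != 0 by rewrite subr_eq0 eq_sym lt_eqF.
have gram_v := svd_gram_col l le_nm svdA.
have [E1 E2] := mean_err_init x M beta m_gt0 rowsA gram_v x0.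
pose G j :=
  (rv2 r zeta *m mx2 r zeta (-1) beta ^+ j *m cv2 1 (- 1 / (1 - beta))) 0 0.
pose E j := kexp A j (fun t => dotv ((kgsm_run A b M beta x0 t).1 - x) v).
apply: (@eq_linrec2 _ (r + beta) (- (r * beta + zeta))
  (fun j => E j.+1) (fun j => G j * dotv (x0 - x) v)) => [j|j||].
- rewrite /E /b (mean_err_rec2 x M beta m_gt0 rowsA gram_v).
  by rewrite /r /zeta /sigma; ring.
- by rewrite /G mx2_exprSS; ring.
- apply: (etrans E1); rewrite /G expr0 mulmx1 rv2_cv2 /r /zeta /sigma.
  by field; apply/andP.
- apply: (etrans E2); rewrite /G expr1 rv2_mx2 rv2_cv2 /r /zeta /sigma.
  by field; apply/andP.
Qed.
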